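(* The set $\check{S}_{AB}$ (the maximal tensor product of $\mathfrak{S}_A$ and $\mathfrak{S}_B$), equipped with the pointwise partial order, is a down-complete Inf semi-lattice, the infimum of any family being computed pointwise: $$\forall \{\Phi_i\;\vert\; i\in I\}\subseteq \check{S}_{AB},\ \forall (\mathfrak{l}_A,\mathfrak{l}_B)\in\mathfrak{E}_A\times\mathfrak{E}_B,\quad \Big(\inf^{\check{S}_{AB}}_{i\in I}\Phi_i\Big)(\mathfrak{l}_A,\mathfrak{l}_B)=\bigwedge_{i\in I}\Phi_i(\mathfrak{l}_A,\mathfrak{l}_B).$$
   Context: $\mathfrak{B}=\{\mathbf{Y},\mathbf{N},\bot\}$ is the poset with $\bot\le\mathbf{Y}$, $\bot\le\mathbf{N}$ and $\mathbf{Y},\mathbf{N}$ incomparable; $\wedge$ denotes its meet ($x\wedge y=x$ if $x=y$, $\bot$ otherwise), and $\overline{\cdot}$ the involution exchanging $\mathbf{Y}$ and $\mathbf{N}$ and fixing $\bot$. $(\mathfrak{S}_A,\mathfrak{E}_A,\epsilon^{\mathfrak{S}_A})$ and $(\mathfrak{S}_B,\mathfrak{E}_B,\epsilon^{\mathfrak{S}_B})$ are States/Effects Chu spaces: $\mathfrak{S}$ and $\mathfrak{E}$ are down-complete Inf semi-lattices (infimum of a subset $X$ written $\inf^{\mathfrak{S}}X$, $\inf^{\mathfrak{E}}X$), $\mathfrak{S}$ has a bottom, and $\epsilon^{\mathfrak{S}}:\mathfrak{E}\to\mathfrak{B}^{\mathfrak{S}}$ preserves arbitrary infima in each variable and is separated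 and extensional; each effect $\mathfrak{l}$ has a negation $\overline{\mathfrak{l}}\in\mathfrak{E}$ with $\epsilon_{\overline{\mathfrak{l}}}(\sigma)=\overline{\epsilon_{\mathfrak{l}}(\sigma)}$, and there is an effect $\mathfrak{Y}_{\mathfrak{E}}$ with $\epsilon_{\mathfrak{Y}_{\mathfrak{E}}}\equiv\mathbf{Y}$. The maximal tensor product $\check{S}_{AB}$ is the set of maps $\Phi:\mathfrak{E}_A\times\mathfrak{E}_B\to\mathfrak{B}$ such that $\Phi(\inf^{\mathfrak{E}_A}_{i}\mathfrak{l}_{i,A},\mathfrak{l}_B)=\bigwedge_i\Phi(\mathfrak{l}_{i,A},\mathfrak{l}_B)$ and $\Phi(\mathfrak{l}_A,\inf^{\mathfrak{E}_B}_{j}\mathfrak{l}_{j,B})=\bigwedge_j\Phi(\mathfrak{l}_A,\mathfrak{l}_{j,B})$ for all families, $\Phi(\overline{\mathfrak{l}_A},\mathfrak{Y}_{\mathfrak{E}_B})=\overline{\Phi(\mathfrak{l}_A,\mathfrak{Y}_{\mathfrak{E}_B})}$, $\Phi(\mathfrak{Y}_{\mathfrak{E}_A},\overline{\mathfrak{l}_B})=\overline{\Phi(\mathfrak{Y}_{\mathfrak{E}_A},\mathfrak{l}_B)}$, and $\Phi(\mathfrak{Y}_{\mathfrak{E}_A},\mathfrak{Y}_{\mathfrak{E}_B})=\mathbf{Y}$. *)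

From Stdlib Require Import Classical ClassicalEpsilon FunctionalExtensionality.

Inductive B3 : Type := Yb | Nb | Bot.

Definition leB (x y : B3) : Prop := x = Bot \/ x = y.

Definition negB (x : B3) : B3 :=
  match x with Yb => Nb | Nb => Yb | Bot => Bot end.

(* Meet of a family in B (meaningful for nonempty index types only:
   it is the greatest lower bound of a nonempty family). *)
Definition bigmeetB {I : Type} (f : I -> B3) : B3 :=
  if excluded_middle_informative (forall i, f i = Yb) then Yb
  else if excluded_middle_informative (forall i, f i = Nb) then Nb
  else Bot.

Definition is_glb_in {X I : Type} (P : X -> Prop) (le : X -> X -> Prop)
  (f : I -> X) (x : X) : Prop :=
  P x /\ (forall i, le x (f i)) /\
  (forall y, P y -> (forall i, le y (f i)) -> le y x).

Definition is_glb {X I : Type} (le : X -> X -> Prop) (f : I -> X) (x : X) :=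
  is_glb_in (fun _ => True) le f x.

Definition partial_order {X : Type} (le : X -> X -> Prop) : Prop :=
  (forall x, le x x) /\ (forall x y, le x y -> le y x -> x = y) /\
  (forall x y z, le x y -> le y z -> le x z).

Definition down_complete_inf {X : Type} (le : X -> X -> Prop) : Prop :=
  partial_order le /\
  forall (I : Type), inhabited I -> forall f : I -> X, exists x, is_glb le f x.

Record SEChu : Type := {
  St : Type;
  Ef : Type;
  leS : St -> St -> Prop;
  leE : Ef -> Ef -> Prop;
  St_dc : down_complete_inf leS;
  Ef_dc : down_complete_inf leE;
  St_bot : exists b : St, forall s, leS b s;
  eps : Ef -> St -> B3;
  eps_inf_E : forall (I : Type), inhabited I -> forall (l : I -> Ef) (l0 : Ef),
      is_glb leE l l0 -> forall s, eps l0 s = bigmeetB (fun i => eps (l i) s);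
  eps_inf_S : forall (I : Type), inhabited I -> forall (s : I -> St) (s0 : St),
      is_glb leS s s0 -> forall l, eps l s0 = bigmeetB (fun i => eps l (s i));
  eps_separated : forall s s', (forall l, eps l s = eps l s') -> s = s';
  eps_extensional : forall l l', (forall s, eps l s = eps l' s) -> l = l';
  negE : Ef -> Ef;
  eps_negE : forall l s, eps (negE l) s = negB (eps l s);
  YE : Ef;
  eps_YE : forall s, eps YE s = Yb
}.

Definition inSmax (A Bc : SEChu) (Phi : Ef A -> Ef Bc -> B3) : Prop :=
  (forall (I : Type), inhabited I -> forall (l : I -> Ef A) (l0 : Ef A),
      is_glb (leE A) l l0 -> forall lB, Phi l0 lB = bigmeetB (fun i => Phi (l i) lB)) /\
  (forall (J : Type), inhabited J -> forall (l : J -> Ef Bc) (l0 : Ef Bc),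
      is_glb (leE Bc) l l0 -> forall lA, Phi lA l0 = bigmeetB (fun j => Phi lA (l j))) /\
  (forall lA, Phi (negE A lA) (YE Bc) = negB (Phi lA (YE Bc))) /\
  (forall lB, Phi (YE A) (negE Bc lB) = negB (Phi (YE A) lB)) /\
  Phi (YE A) (YE Bc) = Yb.

Definition lePW {EA EB : Type} (Phi Psi : EA -> EB -> B3) : Prop :=
  forall lA lB, leB (Phi lA lB) (Psi lA lB).

(* Everything is pointwise: the meet of a nonempty family of elements of the
   maximal tensor product is again in it, because meets in B commute with
   meets (a Fubini property of [bigmeetB]) and with the involution [negB]
   (a meet is Y only if all entries are Y, N only if all are N).  Greatest
   lower bounds in the pointwise order are then inherited from those in B. *)

From Stdlib Require Import ClassicalEpsilon FunctionalExtensionality.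

Lemma bigmeetB_Yb {I : Type} (f : I -> B3) :
  bigmeetB f = Yb <-> forall i, f i = Yb.
Proof.
  unfold bigmeetB; split.
  - repeat destruct excluded_middle_informative; congruence.
  - intro H; destruct excluded_middle_informative; tauto.
Qed.

Lemma bigmeetB_Nb {I : Type} (f : I -> B3) :
  inhabited I -> (bigmeetB f = Nb <-> forall i, f i = Nb).
Proof.
  intros [i0]; unfold bigmeetB; split.
  - repeat destruct excluded_middle_informative; congruence.
  - intro H; destruct excluded_middle_informative as [HY | _].
    + specialize (HY i0); rewrite H in HY; discriminate.
    + destruct excluded_middle_informative; tauto.
Qed.

Lemma bigmeetB_eq {I J : Type} (f : I -> B3) (g : J -> B3) :
  ((forall i, f i = Yb) <-> (forall j, g j = Yb)) ->
  ((forall i, f i = Nb) <-> (forall j, g j = Nb)) ->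
  bigmeetB f = bigmeetB g.
Proof.
  intros HY HN; unfold bigmeetB.
  repeat destruct excluded_middle_informative; tauto.
Qed.

Lemma bigmeetB_ext {I : Type} (f g : I -> B3) :
  (forall i, f i = g i) -> bigmeetB f = bigmeetB g.
Proof. intro H; f_equal; apply functional_extensionality; exact H. Qed.

Lemma bigmeetB_comm {I J : Type} (F : I -> J -> B3) :
  inhabited I -> inhabited J ->
  bigmeetB (fun i => bigmeetB (fun j => F i j)) =
  bigmeetB (fun j => bigmeetB (fun i => F i j)).
Proof.
  intros hI hJ; apply bigmeetB_eq; split; intros H x.
  - apply bigmeetB_Yb; intro i; exact (proj1 (bigmeetB_Yb _) (H i) x).
  - apply bigmeetB_Yb; intro j; exact (proj1 (bigmeetB_Yb _) (H j) x).
  - apply bigmeetB_Nb; [exact hI |]; intro i.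
    exact (proj1 (bigmeetB_Nb _ hJ) (H i) x).
  - apply bigmeetB_Nb; [exact hJ |]; intro j.
    exact (proj1 (bigmeetB_Nb _ hI) (H j) x).
Qed.

Lemma negB_Yb (x : B3) : negB x = Yb <-> x = Nb.
Proof. destruct x; simpl; split; congruence. Qed.

Lemma negB_Nb (x : B3) : negB x = Nb <-> x = Yb.
Proof. destruct x; simpl; split; congruence. Qed.

Lemma bigmeetB_negB {I : Type} (f : I -> B3) :
  inhabited I -> bigmeetB (fun i => negB (f i)) = negB (bigmeetB f).
Proof.
  intro hI; destruct (bigmeetB f) eqn:E; simpl.
  - apply bigmeetB_Nb; [exact hI |]; intro i.
    rewrite (proj1 (bigmeetB_Yb f) E i); reflexivity.
  - apply bigmeetB_Yb; intro i.
    rewrite (proj1 (bigmeetB_Nb f hI) E i); reflexivity.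
  - unfold bigmeetB in *.
    repeat destruct excluded_middle_informative; try congruence.
    + exfalso; apply n0; intro i; apply negB_Yb; auto.
    + exfalso; apply n; intro i; apply negB_Nb; auto.
Qed.

Lemma leB_partial_order : partial_order leB.
Proof.
  unfold leB; split; [| split].
  - intro x; right; reflexivity.
  - intros x y [Hx | Hx] [Hy | Hy]; congruence.
  - intros x y z [Hx | Hx] [Hy | Hy]; [left | left | left | right]; congruence.
Qed.

Lemma bigmeetB_is_glb {I : Type} (f : I -> B3) :
  inhabited I -> is_glb leB f (bigmeetB f).
Proof.
  unfold is_glb, is_glb_in, leB; intro hI; split; [trivial | split].
  - intro i; unfold bigmeetB.
    repeat destruct excluded_middle_informative; auto.
  - intros [| |] _ H; [right | right | left; reflexivity]; symmetry.
    + apply bigmeetB_Yb; intro i; destruct (H i); congruence.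
    + apply bigmeetB_Nb; [exact hI |]; intro i; destruct (H i); congruence.
Qed.

Lemma lePW_partial_order (EA EB : Type) : partial_order (@lePW EA EB).
Proof.
  destruct leB_partial_order as (refl & antisym & trans).
  unfold lePW; split; [| split].
  - intros Phi lA lB; apply refl.
  - intros Phi Psi H1 H2.
    apply functional_extensionality; intro lA.
    apply functional_extensionality; intro lB.
    apply antisym; auto.
  - intros Phi Psi Xi H1 H2 lA lB; eapply trans; eauto.
Qed.

Lemma lePW_is_glb_in {EA EB I : Type} (P : (EA -> EB -> B3) -> Prop)
  (Phi : I -> EA -> EB -> B3) :
  inhabited I -> P (fun lA lB => bigmeetB (fun i => Phi i lA lB)) ->
  is_glb_in P lePW Phi (fun lA lB => bigmeetB (fun i => Phi i lA lB)).
Proof.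
  intros hI HP; split; [exact HP | split].
  - intros i lA lB; apply (bigmeetB_is_glb (fun i => Phi i lA lB) hI).
  - intros Psi _ H lA lB.
    apply (bigmeetB_is_glb (fun i => Phi i lA lB) hI); [trivial |].
    intro i; apply H.
Qed.

Lemma inSmax_bigmeet (A Bc : SEChu) (I : Type) (Phi : I -> Ef A -> Ef Bc -> B3) :
  inhabited I -> (forall i, inSmax A Bc (Phi i)) ->
  inSmax A Bc (fun lA lB => bigmeetB (fun i => Phi i lA lB)).
Proof.
  intros hI HPhi; split; [| split; [| split; [| split]]].
  - intros J hJ l l0 Hglb lB.
    rewrite <- bigmeetB_comm by assumption.
    apply bigmeetB_ext; intro i; apply (proj1 (HPhi i)); assumption.
  - intros J hJ l l0 Hglb lA.
    rewrite <- bigmeetB_comm by assumption.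
    apply bigmeetB_ext; intro i; apply (proj1 (proj2 (HPhi i))); assumption.
  - intro lA; rewrite <- bigmeetB_negB by assumption.
    apply bigmeetB_ext; intro i; apply (HPhi i).
  - intro lB; rewrite <- bigmeetB_negB by assumption.
    apply bigmeetB_ext; intro i; apply (HPhi i).
  - apply bigmeetB_Yb; intro i; apply (HPhi i).
Qed.

Theorem mainTheorem1 (A Bc : SEChu) :
  (* the pointwise order is a partial order on \check S_{AB} *)
  ((forall Phi : Ef A -> Ef Bc -> B3, inSmax A Bc Phi -> lePW Phi Phi) /\
   (forall Phi Psi, inSmax A Bc Phi -> inSmax A Bc Psi ->
      lePW Phi Psi -> lePW Psi Phi -> Phi = Psi) /\
   (forall Phi Psi Xi, inSmax A Bc Phi -> inSmax A Bc Psi -> inSmax A Bc Xi ->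
      lePW Phi Psi -> lePW Psi Xi -> lePW Phi Xi)) /\
  (* every nonempty family has an infimum in \check S_{AB}, computed pointwise *)
  (forall (I : Type), inhabited I ->
   forall Phi : I -> (Ef A -> Ef Bc -> B3),
   (forall i, inSmax A Bc (Phi i)) ->
   is_glb_in (inSmax A Bc) lePW Phi
     (fun lA lB => bigmeetB (fun i => Phi i lA lB))).
Proof.
  destruct (lePW_partial_order (Ef A) (Ef Bc)) as (refl & antisym & trans).
  split; [split; [| split] |].
  - intros Phi _; apply refl.
  - intros Phi Psi _ _; apply antisym.
  - intros Phi Psi Xi _ _ _; apply trans.
  - intros I hI Phi HPhi.
    apply lePW_is_glb_in; [exact hI |].
    apply inSmax_bigmeet; assumption.
Qed.
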